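(* Fix $\alpha\in(0,1)$, $\nu\in(0,\alpha)$. Let $$\widehat{\mathcal M}^+_\nu=\left\{\hat M(y'): y'\in\mathbb R^n,\ \|X^\top y-X^\top y'\|_\infty\le 2q^\nu(\{X_j\}_{j=1}^d)\right\},\qquad \widehat{\mathcal V}^+_\nu=\left\{\frac{e_{j\cdot M}^\top X_M^+}{\hat\sigma_{j\cdot M}}: M\in\widehat{\mathcal M}^+_\nu,\ j\in M\right\}.$$ Then $$P_\mu\left\{\theta_{j\cdot\hat M}\in\left(\hat\theta_{j\cdot\hat M}\pm q^{(\alpha-\nu)}(\widehat{\mathcal V}^+_\nu)\,\hat\sigma_{j\cdot\hat M}\right),\ \forall j\in\hat M\right\}\ge1-\alpha,$$ where $\hat M=\hat M(y)$.
   Context: $X\in\mathbb R^{n\times d}$ is a fixed design matrix with columns $X_1,\dots,X_d$, and $y\in\mathbb R^n$, $y\sim P_\mu$, where $y=\mu+Z$ with $Z\sim P_0$ of mean zero (a location family). A model selection rule $y\mapsto\hat M(y)\subseteq[d]$ selects a model; assume $X_M$ (the columns indexed by $M$) has full column rank for every model $M$ that can be selected. For a model $M$, the projection parameter is $\theta_M=X_M^+\mu$ and its estimate is $\hat\theta_M=X_M^+y$, where $X_M^+$ is the pseudoinverse; $\theta_{j\cdot M}$, $\hat\theta_{j\cdot M}$ denote the entries corresponding to feature $j\in M$. $e_{j\cdot M}\in\mathbb R^{|M|}$ is the canonical basis vector for feature $j$ in $M$, and $\hat\sigma_{j\cdot M}=\sqrt{e_{j\cdot M}^\top(X_M^\top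 X_M)^{-1}e_{j\cdot M}}$. For a set $\mathcal V\subseteq\mathbb R^n$ of contrasts and $\beta\in(0,1)$, $$q^\beta(\mathcal V)=\inf\left\{q: P_0\left\{\sup_{v\in\mathcal V}|v^\top Z|\le q\right\}\ge1-\beta\right\},\quad Z\sim P_0;$$ in particular $q^\nu(\{X_j\}_{j=1}^d)$ uses the contrasts $X_1,\dots,X_d$. *)

From HB Require Import structures.
From mathcomp Require Import all_boot all_order all_algebra.
From mathcomp Require Import all_classical all_reals all_analysis.
Set Implicit Arguments. Unset Strict Implicit. Unset Printing Implicit Defensive.
Import Order.TTheory GRing.Theory Num.Theory.
Local Open Scope classical_set_scope.
Local Open Scope ring_scope.

Section PoSI.
Variables (R : realType) (n d : nat).

(* X_M : the columns of X indexed by M (in increasing order of the index). *)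
Definition subX (X : 'M[R]_(n, d)) (M : {set 'I_d}) : 'M[R]_(n, #|M|) :=
  \matrix_(i < n, k < #|M|) X i (enum_val k).

Definition ejM (M : {set 'I_d}) (j : 'I_d) : 'cV[R]_#|M| :=
  \col_(k < #|M|) ((enum_val k == j)%:R).

(* Pseudoinverse X_M^+ of a full-column-rank X_M: (X_M^T X_M)^{-1} X_M^T. *)
Definition pinvX (X : 'M[R]_(n, d)) (M : {set 'I_d}) : 'M[R]_(#|M|, n) :=
  invmx ((subX X M)^T *m subX X M) *m (subX X M)^T.

Definition projcoef (X : 'M[R]_(n, d)) (M : {set 'I_d}) (j : 'I_d)
  (w : 'cV[R]_n) : R :=
  ((ejM M j)^T *m pinvX X M *m w) 0 0.

Definition sigmaX (X : 'M[R]_(n, d)) (M : {set 'I_d}) (j : 'I_d) : R :=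
  Num.sqrt (((ejM M j)^T *m invmx ((subX X M)^T *m subX X M) *m ejM M j) 0 0).

Definition supnorm (v : 'cV[R]_d) : R := \big[Num.max/0]_(i < d) `|v i 0|.

(* q^beta(V) = inf { q : P0 { sup_{v in V} |v^T Z| <= q } >= 1 - beta },
   with P0 the law of the noise Z, realised as Z : T -> R^n on (T, P). *)
Definition qtl {dT} {T : measurableType dT} (P : probability T R)
  (Z : T -> 'cV[R]_n) (beta : R) (V : set 'rV[R]_n) : R :=
  inf [set q : R | lee ((1 - beta)%:E)
        (P [set t | forall v, V v -> `|(v *m Z t) 0 0| <= q])].

Definition colsX (X : 'M[R]_(n, d)) : set 'rV[R]_n :=
  [set v | exists j : 'I_d, v = (col j X)^T].

Definition Mplus {dT} {T : measurableType dT} (P : probability T R)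
  (Z : T -> 'cV[R]_n) (X : 'M[R]_(n, d)) (Mhat : 'cV[R]_n -> {set 'I_d})
  (nu : R) (y : 'cV[R]_n) : set {set 'I_d} :=
  [set Mhat y' | y' in [set y' : 'cV[R]_n |
     supnorm (X^T *m y - X^T *m y') <= 2 * qtl P Z nu (colsX X)]].

Definition Vplus {dT} {T : measurableType dT} (P : probability T R)
  (Z : T -> 'cV[R]_n) (X : 'M[R]_(n, d)) (Mhat : 'cV[R]_n -> {set 'I_d})
  (nu : R) (y : 'cV[R]_n) : set 'rV[R]_n :=
  [set v | exists M, Mplus P Z X Mhat nu y M /\
     exists2 j, j \in M & v = (sigmaX X M j)^-1 *: ((ejM M j)^T *m pinvX X M)].

End PoSI.

From HB Require Import structures.
From mathcomp Require Import all_boot all_order all_algebra.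
From mathcomp Require Import all_classical all_reals all_analysis.
From mathcomp Require Import lra.
Set Implicit Arguments. Unset Strict Implicit. Unset Printing Implicit Defensive.
Import Order.TTheory GRing.Theory Num.Theory.
Local Open Scope classical_set_scope.
Local Open Scope ring_scope.

(* Let q_A = q^nu({X_j}) and consider the deterministic set of models
   Mstar = {M(y') : ||X^T mu - X^T y'||_oo <= q_A} with its normalized contrasts
   Vstar = {e_{j.M}^T X_M^+ / sigma_{j.M} : M in Mstar, j in M}.  Both are finite.
   - The event A = {|X_j^T Z| <= q_A for all j} has probability >= 1 - nu and
     the event B = {|v^T Z| <= q^(alpha-nu)(Vstar) for all v in Vstar} has
     probability >= 1 - (alpha - nu), since for finitely many contrasts the
     quantile is attained (right continuity of the distribution function of
     max_v |v^T Z|); a union bound gives P(A /\ B) >= 1 - alpha.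
   - On A, ||X^T y - X^T mu||_oo <= q_A for y = mu + Z, so M(y) lies in Mstar
     and, by the triangle inequality, Mstar is contained in M^+_nu(y); hence
     Vstar is contained in V^+_nu(y) and q^(alpha-nu)(Vstar) <= q^(alpha-nu)(V^+_nu(y)).
   - On B, |v^T Z| is then bounded by q^(alpha-nu)(V^+_nu(y)) for the
     contrast of every j in M(y), which is exactly the coverage statement. *)

Section SimultaneousQuantile.
Variables (R : realType) (n : nat) (dT : measure_display) (T : measurableType dT).
Variables (P : probability T R) (Z : T -> 'cV[R]_n).
Hypothesis measurable_Z : forall i : 'I_n, measurable_fun setT (fun t => Z t i 0).

Definition cover_event (V : set 'rV[R]_n) (q : R) : set T :=
  [set t | forall v, V v -> `|(v *m Z t) 0 0| <= q].

Definition cover_levels (V : set 'rV[R]_n) (b : R) : set R :=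
  [set q | ((1 - b)%:E <= P (cover_event V q))%E].

Lemma qtlE V b : qtl P Z b V = inf (cover_levels V b).
Proof. by []. Qed.

Lemma cover_event0 q : cover_event set0 q = setT.
Proof. by apply/seteqP; split=> t // _ v. Qed.

Lemma cover_eventS V1 V2 q : V1 `<=` V2 -> cover_event V2 q `<=` cover_event V1 q.
Proof. by move=> V12 t cov v /V12; apply: cov. Qed.

Lemma measurable_contrast (v : 'rV[R]_n) :
  measurable_fun setT (fun t => (v *m Z t) 0 0).
Proof.
have -> : (fun t => (v *m Z t) 0 0) =
    (fun t => \sum_(i <- index_enum 'I_n) (fun i t => v 0 i * Z t i 0) i t).
  by apply: funext => t; rewrite !mxE.
by apply: measurable_sum => i; apply: measurable_realfun.measurable_funM.
Qed.

(* For a finite list s of contrasts, max_{v in s} |v^T Z| is a real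
   random variable, and the cover event is one of its sublevel sets. *)
Definition max_contrast (s : seq 'rV[R]_n) (t : T) : R :=
  \big[Num.max/0]_(v <- s) `|(v *m Z t) 0 0|.

Lemma measurable_max_contrast s : measurable_fun setT (max_contrast s).
Proof.
elim: s => [|v s IH].
  have -> : max_contrast [::] = cst 0 by apply: funext => t; rewrite /max_contrast big_nil.
  exact: measurable_cst.
have -> : max_contrast (v :: s) = (fun t => `|(v *m Z t) 0 0|) \max max_contrast s.
  by apply: funext => t; rewrite /max_contrast big_cons.
apply: measurable_realfun.measurable_maxr => //.
exact: measurableT_comp (@measurable_realfun.normr_measurable R setT)
  (measurable_contrast v).
Qed.

HB.instance Definition _ s :=
  isMeasurableFun.Build _ _ T R (max_contrast s) (measurable_max_contrast s).

Definition max_contrast_RV s : {RV P >-> R} := max_contrast s.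

Lemma cover_event_max s q : s != [::] ->
  cover_event [set` s] q = max_contrast s @^-1` `]-oo, q].
Proof.
move=> s0; apply/seteqP; split => t /=; rewrite in_itv /=.
- move=> cov; rewrite /max_contrast big_seq; apply: bigmax_le => [|v]; last exact: cov.
  by case: s s0 cov => // v s _ cov; apply: le_trans (cov v (mem_head _ _)).
- move=> le_q v vs; apply: le_trans le_q.
  exact: le_bigmax_seq vs _.
Qed.

Lemma cover_event_cdf s q : s != [::] ->
  P (cover_event [set` s] q) = cdf (max_contrast_RV s) q.
Proof. by move=> s0; rewrite (cover_event_max _ s0). Qed.

Lemma measurable_cover_event V q : finite_set V -> measurable (cover_event V q).
Proof.
move=> /finite_seqP[s ->]; have [->|s0] := eqVneq s [::].
  by rewrite set_nil cover_event0.
rewrite cover_event_max // -[X in measurable X]setTI.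
exact: measurable_max_contrast.
Qed.

(* Since a distribution function tends to 1 at +oo, some level has coverage
   at least 1 - b when b > 0. *)
Lemma cover_levels_neq0 V b : 0 < b -> finite_set V -> cover_levels V b !=set0.
Proof.
move=> b0 /finite_seqP[s ->]; have [->|s0] := eqVneq s [::].
  by exists 0; rewrite /cover_levels /= set_nil cover_event0 probability_setT lee_fin; lra.
have [//|no_level] := pselect (cover_levels [set` s] b !=set0).
have : (1 <= (1 - b)%:E)%E.
  apply: (cvge_to_le (cvg_cdfy1 (max_contrast_RV s))); apply: nearW => r.
  rewrite -cover_event_cdf //; apply/ltW; rewrite ltNge; apply/negP => cov.
  by apply: no_level; exists r.
by rewrite lee_fin; lra.
Qed.

Lemma cover_levels_ge0 V b : b < 1 -> V !=set0 -> lbound (cover_levels V b) 0.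
Proof.
move=> b1 [v Vv] q cov; rewrite leNgt; apply/negP => q0.
suff no_cover : cover_event V q = set0.
  by move: cov; rewrite /cover_levels /= no_cover measure0 lee_fin; lra.
apply/seteqP; split => t // /(_ v Vv); rewrite leNgt => /negP; apply.
exact: lt_le_trans q0 (normr_ge0 _).
Qed.

(* For finitely many contrasts the infimum q^b(V) is attained: the cover
   event at level q^b(V) has probability at least 1 - b, by right
   continuity of the distribution function of max_{v in V} |v^T Z|. *)
Lemma qtl_attained V b : 0 < b -> b < 1 -> finite_set V ->
  ((1 - b)%:E <= P (cover_event V (qtl P Z b V)))%E.
Proof.
move=> b0 b1 finV; have := cover_levels_neq0 b0 finV.
move: finV => /finite_seqP[s ->] levels0; have [->|s0] := eqVneq s [::].
  by rewrite set_nil cover_event0 probability_setT lee_fin; lra.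
rewrite cover_event_cdf // qtlE; set q0 := inf _.
apply: (cvge_to_ge (@cdf_right_continuous _ _ _ _ (max_contrast_RV s) q0)).
near=> r.
have q0r : q0 < r by near: r; exact: nbhs_right_gt.
have [q level_q q_r] := inf_lt levels0 q0r.
apply: le_trans level_q _; rewrite cover_event_cdf //.
exact/cdf_nondecreasing/ltW/q_r.
Unshelve. all: by end_near.
Qed.

Lemma le_qtl V1 V2 b : 0 < b -> b < 1 -> V1 !=set0 -> finite_set V2 ->
  V1 `<=` V2 -> qtl P Z b V1 <= qtl P Z b V2.
Proof.
move=> b0 b1 V1n0 finV2 V12; rewrite !qtlE.
apply: lb_le_inf (cover_levels_neq0 b0 finV2) _ => q level_q.
apply: ge_inf; first by exists 0; exact: cover_levels_ge0.
apply: le_trans level_q _; apply: le_measure; rewrite ?inE.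
- exact: measurable_cover_event.
- exact: measurable_cover_event (sub_finite_set V12 finV2).
- exact: cover_eventS.
Qed.

End SimultaneousQuantile.

Section SupNorm.
Variables (R : realType) (d : nat).
Implicit Types (u v : 'cV[R]_d).

Lemma le_supnorm v i : `|v i 0| <= supnorm v.
Proof. exact: le_bigmax_seq (mem_index_enum i) _. Qed.

Lemma supnorm_le v c : 0 <= c -> (forall i, `|v i 0| <= c) -> supnorm v <= c.
Proof. by move=> c0 le_c; apply: bigmax_le. Qed.

Lemma supnorm_ge0 v : 0 <= supnorm v.
Proof. exact: bigmax_ge_id. Qed.

Lemma supnormN v : supnorm (- v) = supnorm v.
Proof. by apply: eq_bigr => i _; rewrite mxE normrN. Qed.

Lemma supnormD u v : supnorm (u + v) <= supnorm u + supnorm v.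
Proof.
apply: supnorm_le => [|i]; first by rewrite addr_ge0 ?supnorm_ge0.
by rewrite mxE (le_trans (ler_normD _ _)) // lerD ?le_supnorm.
Qed.

End SupNorm.

Lemma dotmx_self_le0 (R : realType) n (w : 'rV[R]_n) : (w *m w^T) 0 0 <= 0 -> w = 0.
Proof.
rewrite mxE => le0.
have sq_ge0 i : true -> 0 <= w 0 i * w^T i 0 by rewrite mxE -expr2 sqr_ge0.
have sum0 : \sum_i w 0 i * w^T i 0 = 0.
  by apply/eqP; rewrite eq_le le0 sumr_ge0.
apply/rowP => i; have := psumr_eq0P sq_ge0 sum0 (i := i) isT.
by rewrite !mxE => /eqP; rewrite mulf_eq0 orbb => /eqP.
Qed.

Lemma gram_unit (R : realType) n k (A : 'M[R]_(n, k)) : \rank A = k ->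
  A^T *m A \in unitmx.
Proof.
move=> rankA; rewrite -row_free_unit -kermx_eq0.
have freeAT : row_free A^T by rewrite /row_free mxrank_tr rankA.
have gram_inj (u : 'rV[R]_k) : u *m (A^T *m A) = 0 -> u = 0.
  move=> /(congr1 (mulmxr u^T)) /=; rewrite mul0mx => uGu.
  have : (u *m A^T) *m (u *m A^T)^T = 0.
    by rewrite trmx_mul trmxK !mulmxA -(mulmxA u) uGu.
  move=> uAT0; have := @dotmx_self_le0 _ _ (u *m A^T); rewrite uAT0 mxE lexx.
  by move=> /(_ isT) /eqP; rewrite mulmx_free_eq0 // => /eqP.
apply/eqP/row_matrixP => i; rewrite row0; apply: gram_inj.
by rewrite -row_mul mulmx_ker row0.
Qed.

Section Design.
Variables (R : realType) (n d : nat) (X : 'M[R]_(n, d)).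

(* The unnormalized contrast e_{j.M}^T X_M^+, so theta_{j.M} = u_{j.M} mu. *)
Definition coef_contrast (M : {set 'I_d}) (j : 'I_d) : 'rV[R]_n :=
  (ejM R M j)^T *m pinvX X M.

Definition contrast (M : {set 'I_d}) (j : 'I_d) : 'rV[R]_n :=
  (sigmaX X M j)^-1 *: coef_contrast M j.

Lemma projcoefD M j (w z : 'cV[R]_n) :
  projcoef X M j (w + z) = projcoef X M j w + (coef_contrast M j *m z) 0 0.
Proof. by rewrite /projcoef mulmxDr mxE. Qed.

Lemma coef_contrast_norm M j : \rank (subX X M) = #|M| ->
  coef_contrast M j *m (coef_contrast M j)^T =
  (ejM R M j)^T *m invmx ((subX X M)^T *m subX X M) *m ejM R M j.
Proof.
move=> rankM; have G_unit := gram_unit rankM.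
set A := subX X M in G_unit *; set G := A^T *m A in G_unit *.
have GT : G^T = G by rewrite /G trmx_mul trmxK.
rewrite /coef_contrast /pinvX -/A -/G !trmx_mul trmxK trmx_inv GT.
by rewrite -!mulmxA (mulmxA A^T) -/G (mulmxA G) mulmxV // mul1mx trmxK.
Qed.

(* Hence a normalized contrast bound |u Z / sigma| <= q gives |u Z| <= q sigma,
   including in the degenerate case sigma = 0, where u = 0. *)
Lemma coef_contrast_bound M j (z : 'cV[R]_n) q : \rank (subX X M) = #|M| ->
  `|(contrast M j *m z) 0 0| <= q -> `|(coef_contrast M j *m z) 0 0| <= q * sigmaX X M j.
Proof.
move=> rankM; rewrite /contrast -scalemxAl mxE => bound.
have [sigma0|sigma_neq0] := eqVneq (sigmaX X M j) 0.
  suff -> : coef_contrast M j = 0 by rewrite mul0mx mxE normr0 sigma0 mulr0.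
  apply: dotmx_self_le0; rewrite coef_contrast_norm //.
  by move/eqP: sigma0; rewrite /sigmaX sqrtr_eq0.
have sigma_gt0 : 0 < sigmaX X M j by rewrite lt_def sigma_neq0 sqrtr_ge0.
by move: bound; rewrite normrM gtr0_norm ?invr_gt0 // ler_pdivrMl // mulrC.
Qed.

Lemma projcoef_interval M j (mu z : 'cV[R]_n) q : \rank (subX X M) = #|M| ->
  `|(contrast M j *m z) 0 0| <= q ->
  projcoef X M j (mu + z) - q * sigmaX X M j <= projcoef X M j mu
    <= projcoef X M j (mu + z) + q * sigmaX X M j.
Proof.
move=> rankM /(coef_contrast_bound rankM); rewrite projcoefD ler_norml.
by move=> /andP[lo hi]; apply/andP; split; lra.
Qed.

Variable Mhat : 'cV[R]_n -> {set 'I_d}.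

(* Models selected from some y' with ||X^T y0 - X^T y'||_oo <= c;
   M^+_nu(y) is this set for c = 2 q^nu({X_j}) and y0 = y. *)
Definition Mnear (c : R) (y0 : 'cV[R]_n) : set {set 'I_d} :=
  [set Mhat y' | y' in [set y' | supnorm (X^T *m y0 - X^T *m y') <= c]].

Lemma Mnear_selected c y0 y : supnorm (X^T *m y0 - X^T *m y) <= c -> Mnear c y0 (Mhat y).
Proof. by move=> near_y; exists y. Qed.

Lemma Mnear_shift c y0 y : supnorm (X^T *m y - X^T *m y0) <= c ->
  Mnear c y0 `<=` Mnear (2 * c) y.
Proof.
move=> y_y0 _ [y' y0_y' <-]; apply: Mnear_selected.
rewrite (_ : X^T *m y - X^T *m y' = (X^T *m y - X^T *m y0) + (X^T *m y0 - X^T *m y'));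
  last by rewrite addrA subrK.
by rewrite (le_trans (supnormD _ _)) // mulr2n mulrDl mul1r lerD.
Qed.

(* The normalized contrasts of all features of the models in MM;
   V^+_nu(y) is this set for MM = M^+_nu(y). *)
Definition contrasts (MM : set {set 'I_d}) : set 'rV[R]_n :=
  [set v | exists M, MM M /\ exists2 j, j \in M & v = contrast M j].

Lemma contrasts_finite MM : finite_set (contrasts MM).
Proof.
apply: sub_finite_set (finite_image (fun p => contrast p.1 p.2) (@finite_finset _ setT)).
by move=> v [M [_ [j _ ->]]]; exists (M, j).
Qed.

Lemma contrastsS MM1 MM2 : MM1 `<=` MM2 -> contrasts MM1 `<=` contrasts MM2.
Proof. by move=> MM12 v [M [/MM12 MM2M jv]]; exists M. Qed.

Lemma colsX_finite : finite_set (colsX X).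
Proof.
apply: sub_finite_set (finite_image (fun j => (col j X)^T) (@finite_finset _ setT)).
by move=> v [j ->]; exists j.
Qed.

Lemma supnorm_colsX (z : 'cV[R]_n) q : 0 <= q ->
  (forall v, colsX X v -> `|(v *m z) 0 0| <= q) -> supnorm (X^T *m z) <= q.
Proof.
move=> q0 cov; apply: supnorm_le q0 _ => i.
by have := cov _ (ex_intro _ i erefl); rewrite tr_col -row_mul mxE.
Qed.

End Design.

Lemma le_prob_setI d (T : measurableType d) (R : realType) (P : probability T R)
  (A B : set T) (x y : R) : measurable A -> measurable B ->
  ((1 - x)%:E <= P A)%E -> ((1 - y)%:E <= P B)%E ->
  ((1 - (x + y))%:E <= P (A `&` B))%E.
Proof.
move=> mA mB PA PB; have mAB := measurableI _ _ mA mB.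
have PAB : (P (~` (A `&` B)) <= P (~` A) + P (~` B))%E.
  by rewrite setCI; exact: (measureU2 P (measurableC mA) (measurableC mB)).
rewrite !probability_setC // in PAB.
move: PA PB PAB; rewrite -(fineK (fin_num_measure P _ mA)).
rewrite -(fineK (fin_num_measure P _ mB)) -(fineK (fin_num_measure P _ mAB)).
by rewrite !lee_fin; lra.
Qed.

Theorem corollary4 (R : realType) (n d : nat) (dT : measure_display)
  (T : measurableType dT) (P : probability T R)
  (Z : T -> 'cV[R]_n) (mu : 'cV[R]_n) (X : 'M[R]_(n, d))
  (Mhat : 'cV[R]_n -> {set 'I_d}) (alpha nu : R) :
  0 < alpha < 1 -> 0 < nu < alpha ->
  (* the noise Z is a random vector with mean zero *)
  (forall i : 'I_n, measurable_fun setT (fun t => Z t i 0)) ->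
  (forall i : 'I_n, P.-integrable setT (fun t => (Z t i 0)%:E) /\
                    (\int[P]_t (Z t i 0)%:E = 0)%E) ->
  (* X_M has full column rank for every selectable model M *)
  (forall y' : 'cV[R]_n, \rank (subX X (Mhat y')) = #|Mhat y'|) ->
  let E := [set t | let y := mu + Z t in let M := Mhat y in
             let q := qtl P Z (alpha - nu) (Vplus P Z X Mhat nu y) in
             forall j, j \in M ->
               projcoef X M j y - q * sigmaX X M j <= projcoef X M j mu
               <= projcoef X M j y + q * sigmaX X M j] in
  measurable E ->
  ((1 - alpha)%:E <= P E)%E.
Proof.
move=> /andP[alpha0 alpha1] /andP[nu0 nu_alpha] mZ _ full_rank E mE.
have [b0 b1 nu1] : [/\ 0 < alpha - nu, alpha - nu < 1 & nu < 1] by split; lra.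
pose qA := qtl P Z nu (colsX X).
pose Vstar := contrasts X (Mnear X Mhat qA mu).
pose A := cover_event Z (colsX X) qA.
pose B := cover_event Z Vstar (qtl P Z (alpha - nu) Vstar).
have [mA mB] : measurable A /\ measurable B.
  by split; apply: measurable_cover_event => //; [exact: colsX_finite | exact: contrasts_finite].
have PAB : ((1 - alpha)%:E <= P (A `&` B))%E.
  rewrite (_ : alpha = nu + (alpha - nu)); last by lra.
  by apply: le_prob_setI; rewrite // ?qtl_attained //; [exact: colsX_finite | exact: contrasts_finite].
apply: le_trans PAB _; apply: le_measure; rewrite ?inE //; first exact: measurableI.
move=> t [At Bt] y M q j jM.
(* On A: X^T y is q_A-close to X^T mu, so M(y) is in Mstar and Vstar <= V^+(y). *)
have qA0 : 0 <= qA by apply: le_trans (At _ (ex_intro _ j erefl)).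
have y_mu : supnorm (X^T *m y - X^T *m mu) <= qA.
  by rewrite /y mulmxDr addrAC subrr add0r; exact: supnorm_colsX.
have near_mu : Mnear X Mhat qA mu M by apply: Mnear_selected; rewrite -opprB supnormN.
have Vstar_Vplus : Vstar `<=` Vplus P Z X Mhat nu y := contrastsS (Mnear_shift y_mu).
(* On B: the contrast of j in M(y) is bounded by q(Vstar) <= q(V^+(y)). *)
have Vstar_j : Vstar (contrast X M j) by exists M; split=> //; exists j.
apply: (projcoef_interval mu (full_rank y)).
apply: le_trans (Bt _ Vstar_j) _.
apply: le_qtl => //; last exact: contrasts_finite.
by exists (contrast X M j).
Qed.
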